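(* Consider the following remote estimation problem. Let $a\in\mathbb{R}$ and $x(t+1)=ax(t)+w(t)$, $x(0)=x_0$, where $\{w(t)\}$ are i.i.d. with a symmetric unimodal density with finite second moment. A channel $c(t)\in\{0,1\}$ is a Markov chain with $\mathbb{P}(c(t+1)=1\mid c(t)=0)=p_{01}$, $\mathbb{P}(c(t+1)=1\mid c(t)=1)=p_{11}$, $p_{01},p_{11}\in(0,1)$. The sensor chooses $u(t)\in\{0,1\}$; the estimator receives $y(t)=x(t)$ if $u(t)=1$ and $c(t)=1$, and $y(t)=\Xi$ otherwise. The sensor learns $c(t)$ at time $t+1$ only if $u(t)=1$, and $b(t)$ denotes its conditional probability that $c(t)=1$ given its information (updated as $b(t+1)=p_{11}$ if $u(t)=1,c(t)=1$; $p_{01}$ if $u(t)=1,c(t)=0$; $p_{11}b(t)+p_{01}(1-b(t))$ if $u(t)=0$). For $\lambda>0$, $\beta\in(0,1)$ let the cost of a pair of strategies be $\mathbb{E}\big[\sum_{t\ge0}\beta^t((x(t)-\hat x(t))^2+\lambda u(t))\big]$. Define $v(-1)=x_0$, $v(t)=av(t-1)$ if $y(t)=\Xi$ and $v(t)=y(t)$ otherwise, and $e(t)=x(t)-av(t-1)$. Then for any scheduling strategy of the form $u(t)=f_t(x(t),b(t),y(0),\dots,y(t-1))$ and estimation strategy of the form $\hat x(t)=g_t(y(0),\dots,y(t))$, there exist equivalent scheduling and estimation strategies of the form $$u(t)=\tilde f_t\big(e(t),b(t),y(0),\dots,y(t-1)\big),\qquad \hat x(t)=\tilde g_t\big(y(0),\dots,y(t)\big)+v(t).$$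 Conversely, for any strategies of the latter form there exist equivalent strategies of the former form.
   Context: All maps are measurable. $\Xi$ is a symbol meaning no packet received. Two pairs of (scheduling, estimation) strategies are equivalent if they yield the same expected discounted cost $\mathbb{E}\big[\sum_{t\ge0}\beta^t((x(t)-\hat x(t))^2+\lambda u(t))\big]$. *)

From HB Require Import structures.
From mathcomp Require Import all_boot all_order all_algebra.
From mathcomp Require Import all_classical all_reals all_analysis.
Set Implicit Arguments. Unset Strict Implicit. Unset Printing Implicit Defensive.
Import Order.TTheory GRing.Theory Num.Theory.
Local Open Scope classical_set_scope.
Local Open Scope ring_scope.

(* The observation space  R u {Xi}: an observation is [Some r] (packet *)
(* with value r received) or [None] (= the symbol Xi, nothing received).*)
Definition obs (R : realType) := option R.

Fact obs_display : measure_display. Proof. exact. Qed.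

Section obs_measurable.
Variable R : realType.
HB.instance Definition _ := Pointed.on (obs R).

Definition obs_measurable : set (set (obs R)) :=
  [set A | measurable ((@Some R) @^-1` A)].

Lemma obs_measurable0 : obs_measurable set0.
Proof. by rewrite /obs_measurable /= preimage_set0; exact: measurable0. Qed.

Lemma obs_measurableC A : obs_measurable A -> obs_measurable (~` A).
Proof. by rewrite /obs_measurable /= preimage_setC => mA; exact: measurableC. Qed.

Lemma obs_measurable_bigcup (F : (set (obs R))^nat) :
  (forall i, obs_measurable (F i)) -> obs_measurable (\bigcup_i F i).
Proof.
by rewrite /obs_measurable /= preimage_bigcup => mF; exact: bigcup_measurable.
Qed.

HB.instance Definition _ := @isMeasurable.Build obs_display (obs R)
  obs_measurable obs_measurable0 obs_measurableC obs_measurable_bigcup.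
End obs_measurable.

Notation Xi := (@None _).

(* A scheduling strategy maps (t, first argument, b(t), y(0..t-1)) to   *)
(* u(t) in {0,1} (encoded as bool); the first argument is x(t) for the  *)
(* original form and e(t) for the transformed form.                     *)
Definition sched_strategy (R : realType) :=
  forall t : nat, R -> R -> t.-tuple (obs R) -> bool.
Definition est_strategy (R : realType) :=
  forall t : nat, t.+1.-tuple (obs R) -> R.

Definition sched_measurable (R : realType) (f : sched_strategy R) :=
  forall t : nat, measurable_fun setT
    (fun z : R * R * t.-tuple (obs R) => f t z.1.1 z.1.2 z.2).
Definition est_measurable (R : realType) (g : est_strategy R) :=
  forall t : nat, measurable_fun setT (fun h : t.+1.-tuple (obs R) => g t h).

Section model.
Variable R : realType.
Variables (d : measure_display) (Omega : measurableType d).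
Variables (a x0 b0 p01 p11 lam beta : R).
Variables (w : nat -> Omega -> R) (c : nat -> Omega -> bool).

(* v(t) computed from the observation history y(0..t) with v(-1) = x0:
   v(t) = a v(t-1) if y(t) = Xi, and v(t) = y(t) otherwise.
   [vhist h] for h = y(0..t-1) is v(t-1). *)
Definition vstep (v : R) (y : obs R) : R :=
  match y with Some r => r | None => a * v end.
Definition vhist (s : seq (obs R)) : R := foldl vstep x0 s.

(* Closed loop, for a scheduler F (acting on x(t), b(t), y(0..t-1)):
   state at time t = (x(t), b(t), y(0..t-1)). *)
Fixpoint clstate (F : sched_strategy R) (om : Omega) (t : nat) :
    R * R * t.-tuple (obs R) :=
  match t as t0 return R * R * t0.-tuple (obs R) with
  | 0 => (x0, b0, [tuple])
  | t'.+1 =>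
      let: (x, b, h) := clstate F om t' in
      let u := F t' x b h in
      let y := if u && c t' om then Some x else Xi in
      (a * x + w t' om,
       (if u then (if c t' om then p11 else p01) else p11 * b + p01 * (1 - b)),
       rcons_tuple h y)
  end.

Definition xproc F om t : R := (clstate F om t).1.1.
Definition bproc F om t : R := (clstate F om t).1.2.
Definition hist F om t : t.-tuple (obs R) := (clstate F om t).2.
Definition uproc F om t : bool := F t (xproc F om t) (bproc F om t) (hist F om t).
Definition yproc F om t : obs R :=
  if uproc F om t && c t om then Some (xproc F om t) else Xi.
Definition xhat F (G : est_strategy R) om t : R := G t (hist F om t.+1).

Local Open Scope ereal_scope.
Definition cost (P : probability Omega R) (F : sched_strategy R)
    (G : est_strategy R) : \bar R :=
  \int[P]_om (\sum_(0 <= t <oo)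
    ((beta ^+ t * ((xproc F om t - xhat F G om t) ^+ 2
                   + lam * (uproc F om t)%:R))%R)%:E).
Local Close Scope ereal_scope.

Definition sched_of_err (ft : sched_strategy R) : sched_strategy R :=
  fun t x b h => ft t (x - a * vhist h) b h.
Definition est_of_err (gt : est_strategy R) : est_strategy R :=
  fun t h => gt t h + vhist h.
End model.

Local Open Scope ereal_scope.

Definition cyl (Omega : Type) (c : nat -> Omega -> bool) n (s : n.-tuple bool)
  : set Omega := [set om | forall i : 'I_n, c i om = tnth s i].

Definition has_density (R : realType) d (Omega : measurableType d)
    (P : probability Omega R) (w : nat -> Omega -> R) (phi : R -> R) :=
  [/\ measurable_fun setT phi, (forall x, (0 <= phi x)%R) &
      forall t (A : set R), measurable A ->
        P (w t @^-1` A) = \int[lebesgue_measure]_(x in A) (phi x)%:E].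

Definition sym_unimodal_L2 (R : realType) (phi : R -> R) :=
  [/\ (forall x : R, phi (- x)%R = phi x),
      (forall x y : R, (0 <= x)%R -> (x <= y)%R -> (phi y <= phi x)%R) &
      \int[lebesgue_measure]_x ((x ^+ 2 * phi x)%R)%:E < +oo].

(* the w(t) are mutually independent and independent of the channel
   process c: product rule on every finite family of generating events *)
Definition noise_indep (R : realType) d (Omega : measurableType d)
    (P : probability Omega R) (w : nat -> Omega -> R)
    (c : nat -> Omega -> bool) :=
  forall n (A : 'I_n -> set R) (s : n.-tuple bool),
    (forall i, measurable (A i)) ->
    P ((\bigcap_(i in [set: 'I_n]) (w i @^-1` A i)) `&` cyl c s) =
    (\prod_(i < n) P (w i @^-1` A i)) * P (cyl c s).

Definition channel_markov (R : realType) d (Omega : measurableType d)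
    (P : probability Omega R) (c : nat -> Omega -> bool) (b0 p01 p11 : R) :=
  P [set om | c 0%N om] = b0%:E /\
  forall t (s : t.+1.-tuple bool),
    P (cyl c s `&` [set om | c t.+1 om]) =
    (if tnth s ord_max then p11 else p01)%:E * P (cyl c s).
Local Close Scope ereal_scope.

From HB Require Import structures.
From mathcomp Require Import all_boot all_order all_algebra.
From mathcomp Require Import all_classical all_reals all_analysis.
From mathcomp Require Import measurable_realfun.
Import Order.TTheory GRing.Theory Num.Theory.
Local Open Scope classical_set_scope.
Local Open Scope ring_scope.

(* The predictor a v(t-1) is a measurable function of y(0..t-1), the
   information common to sensor and estimator.  Hence subtracting it from
   the sensor's argument, and adding v(t) to the estimator's output, is a
   bijection between the two classes of measurable strategies whose inverse
   is again measurable.  Corresponding strategies are literally equal as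
   functions, so their costs coincide. *)

Section error_form.
Context {R : realType}.

Lemma measurable_Some_image (Y : set R) :
  measurable Y -> measurable (Some @` Y : set (obs R)).
Proof.
move=> mY; rewrite /measurable /= /obs_measurable.
apply: (eq_ind Y measurable mY); apply/seteqP.
by split; [exact: preimage_image | move=> r [s Ys [<-]]].
Qed.

Lemma measurable_Xi : measurable [set Xi : obs R].
Proof.
rewrite /measurable /= /obs_measurable.
by apply: (eq_ind set0 measurable measurable0); apply/seteqP; split.
Qed.

Lemma measurable_fun_vstep (a : R) dT (T : measurableType dT)
    (v : T -> R) (y : T -> obs R) :
  measurable_fun setT v -> measurable_fun setT y ->
  measurable_fun setT (fun x => vstep a (v x) (y x)).
Proof.
move=> mv my _ Y mY; rewrite setTI.
have my_pre B : measurable B -> measurable (y @^-1` B).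
  by move=> mB; rewrite -[_ @^-1` _]setTI; exact: my.
have -> : (fun x => vstep a (v x) (y x)) @^-1` Y =
    y @^-1` (Some @` Y) `|` (y @^-1` [set Xi] `&` (fun x => a * v x) @^-1` Y).
  apply/seteqP; split => x /=.
    by case: (y x) => [r|] Yx; [left; exists r | right].
  by case=> [[r Yr <-] | [/= -> ]].
apply: measurableU; first exact: my_pre _ (measurable_Some_image _ mY).
apply: measurableI; first exact: (my_pre [set Xi] measurable_Xi).
rewrite -[_ @^-1` _]setTI.
exact: (measurable_funM (measurable_cst a) mv).
Qed.

Lemma measurable_fun_foldl_vstep (a : R) n dT (T : measurableType dT)
    (v : T -> R) (h : T -> n.-tuple (obs R)) :
  measurable_fun setT v -> measurable_fun setT h ->
  measurable_fun setT (fun x => foldl (vstep a) (v x) (h x)).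
Proof.
elim: n v h => [|n IHn] v h mv mh.
  by apply: (eq_measurable_fun v) => // x _; rewrite tuple0.
apply: (eq_measurable_fun (fun x =>
    foldl (vstep a) (vstep a (v x) (thead (h x))) [tuple of behead (h x)])).
  by move=> x _; rewrite [in RHS](tuple_eta (h x)).
apply: IHn; last exact: (measurableT_comp (@measurable_behead _ _ n) mh).
exact: measurable_fun_vstep _ (measurableT_comp (measurable_tnth ord0) mh).
Qed.

Lemma measurable_vhist (a x0 : R) n :
  measurable_fun setT (fun h : n.-tuple (obs R) => vhist a x0 h).
Proof.
exact: measurable_fun_foldl_vstep (measurable_cst x0) (@measurable_id _ _ setT).
Qed.

Definition sched_shift (k : forall t, t.-tuple (obs R) -> R)
    (f : sched_strategy R) : sched_strategy R :=
  fun t x b h => f t (x + k t h) b h.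

Definition est_shift (k : forall t, t.+1.-tuple (obs R) -> R)
    (g : est_strategy R) : est_strategy R :=
  fun t h => g t h + k t h.

Lemma sched_measurable_shift (k : forall t, t.-tuple (obs R) -> R)
    (f : sched_strategy R) :
  (forall t, measurable_fun setT (k t)) -> sched_measurable f ->
  sched_measurable (sched_shift k f).
Proof.
move=> mk mf t.
apply: (measurableT_comp (mf t)
  (g := fun z : R * R * t.-tuple (obs R) => (z.1.1 + k t z.2, z.1.2, z.2))).
apply: measurable_fun_pair => //; apply: measurable_fun_pair.
  apply: measurable_funD; first exact: measurableT_comp measurable_fst measurable_fst.
  exact: measurableT_comp (mk t) measurable_snd.
exact: measurableT_comp measurable_snd measurable_fst.
Qed.

Lemma est_measurable_shift (k : forall t, t.+1.-tuple (obs R) -> R)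
    (g : est_strategy R) :
  (forall t, measurable_fun setT (k t)) -> est_measurable g ->
  est_measurable (est_shift k g).
Proof. move=> mk mg t; exact: (measurable_funD (mg t) (mk t)). Qed.

Variables a x0 : R.

Definition sched_to_err : sched_strategy R -> sched_strategy R :=
  sched_shift (fun t h => a * vhist a x0 h).

Definition est_to_err : est_strategy R -> est_strategy R :=
  est_shift (fun t h => - vhist a x0 h).

Lemma sched_to_errK : cancel sched_to_err (sched_of_err a x0).
Proof.
move=> f; apply/functional_extensionality_dep => t.
apply/funext => x; apply/funext => b; apply/funext => h.
by rewrite /sched_of_err /sched_to_err /sched_shift subrK.
Qed.

Lemma est_to_errK : cancel est_to_err (est_of_err a x0).
Proof.
move=> g; apply/functional_extensionality_dep => t.
by apply/funext => h; rewrite /est_of_err /est_to_err /est_shift subrK.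
Qed.

Lemma sched_measurable_to_err f :
  sched_measurable f -> sched_measurable (sched_to_err f).
Proof.
apply: sched_measurable_shift => t.
exact: (measurable_funM (measurable_cst a) (measurable_vhist a x0 t)).
Qed.

Lemma sched_measurable_of_err ft :
  sched_measurable ft -> sched_measurable (sched_of_err a x0 ft).
Proof.
apply: (@sched_measurable_shift (fun t h => - (a * vhist a x0 h))) => t.
exact: (measurable_funN
  (measurable_funM (measurable_cst a) (measurable_vhist a x0 t))).
Qed.

Lemma est_measurable_to_err g : est_measurable g -> est_measurable (est_to_err g).
Proof.
apply: (@est_measurable_shift (fun t h => - vhist a x0 h)) => t.
exact: measurable_funN (measurable_vhist a x0 t.+1).
Qed.

Lemma est_measurable_of_err gt :
  est_measurable gt -> est_measurable (est_of_err a x0 gt).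
Proof.
exact: (@est_measurable_shift (fun t h => vhist a x0 h) gt
  (fun t => measurable_vhist a x0 t.+1)).
Qed.

End error_form.

Theorem lemma2 (R : realType) (d : measure_display) (Omega : measurableType d)
    (P : probability Omega R)
    (a x0 b0 p01 p11 lam beta : R) (phi : R -> R)
    (w : nat -> Omega -> R) (c : nat -> Omega -> bool) :
  0 < p01 < 1 -> 0 < p11 < 1 -> 0 <= b0 <= 1 ->
  0 < lam -> 0 < beta < 1 ->
  (forall t, measurable_fun setT (w t)) ->
  (forall t, measurable [set om | c t om]) ->
  has_density P w phi -> sym_unimodal_L2 phi ->
  noise_indep P w c -> channel_markov P c b0 p01 p11 ->
  (forall (f : sched_strategy R) (g : est_strategy R),
     sched_measurable f -> est_measurable g ->
     exists (ft : sched_strategy R) (gt : est_strategy R),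
       [/\ sched_measurable ft, est_measurable gt &
         cost a x0 b0 p01 p11 lam beta w c P f g =
         cost a x0 b0 p01 p11 lam beta w c P
           (sched_of_err a x0 ft) (est_of_err a x0 gt)]) /\
  (forall (ft : sched_strategy R) (gt : est_strategy R),
     sched_measurable ft -> est_measurable gt ->
     exists (f : sched_strategy R) (g : est_strategy R),
       [/\ sched_measurable f, est_measurable g &
         cost a x0 b0 p01 p11 lam beta w c P
           (sched_of_err a x0 ft) (est_of_err a x0 gt) =
         cost a x0 b0 p01 p11 lam beta w c P f g]).
Proof.
move=> _ _ _ _ _ _ _ _ _ _ _; split=> [f g mf mg | ft gt mft mgt].
- exists (sched_to_err a x0 f), (est_to_err a x0 g).
  rewrite sched_to_errK est_to_errK.
  by split; [exact: sched_measurable_to_err | exact: est_measurable_to_err |].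
- exists (sched_of_err a x0 ft), (est_of_err a x0 gt).
  by split; [exact: sched_measurable_of_err | exact: est_measurable_of_err |].
Qed.
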